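(* Let $M$ be a large positive parameter and let $\mathcal{X}$ be any subset of $\{1,2,\ldots,10^M\}$. For a large positive parameter $N$, let $\mathcal{J}(N)$ denote the number of solutions $(x,y,p)$ of $$x\equiv y \pmod p;\qquad x,y\in\mathcal{X},\quad p\le N,\ p \text{ prime}.$$ Then $$\mathcal{J}(N)=\pi(N)\,|\mathcal{X}|+O\!\left(\frac{|\mathcal{X}|^2 M}{\log M}\right),$$ where the implied constant is absolute.
   Context: $\pi(N)$ denotes the number of primes $p\le N$. *)

From mathcomp Require Import all_boot.
From Stdlib Require Import Reals.

Definition primepi (N : nat) : nat := count prime (iota 0 N.+1).

(* J(N) = number of triples (x,y,p) with x,y in X, p <= N prime, x = y mod p.
   X is a duplicate-free list (a finite set of naturals). *)
Definition Jcount (X : seq nat) (N : nat) : nat :=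
  \sum_(x <- X) \sum_(y <- X)
     count (fun p => prime p && (x == y %[mod p])) (iota 0 N.+1).

From Stdlib Require Import Reals Lra Psatz.
From mathcomp Require Import all_boot zify.

(* The diagonal x = y contributes exactly pi(N) |X|.  For x <> y every prime
   counted divides |x - y| <= 10^M, so the pair contributes at most the number
   k of distinct prime factors of |x - y|.  The product of k distinct primes is
   at least k!, hence k! <= 10^M, and since ln k! >= (k/2) ln (k/2) this forces
   k = O(M / ln M). *)

Definition ncongr (N x y : nat) : nat :=
  count (fun p => prime p && (x == y %[mod p])) (iota 0 N.+1).

Lemma pow_le_fact j k : j ^ (k - j) <= k`!.
Proof.
elim: k => [|k IHk]; first by rewrite sub0n.
have [le_jk|lt_kj] := leqP j k.
- by rewrite subSn // expnS factS leq_mul // leqW.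
- by rewrite -subn_eq0 in lt_kj; rewrite (eqP lt_kj) fact_gt0.
Qed.

Lemma prod_iota_le_path (s : seq nat) a :
  path ltn a s -> \prod_(i < size s) (a.+1 + i) <= \prod_(x <- s) x.
Proof.
elim: s a => [|x s IHs] a /=; first by rewrite big_ord0 big_nil.
case/andP=> lt_ax path_s; rewrite big_ord_recl big_cons addn0 leq_mul //.
apply: leq_trans (IHs x path_s); by apply: leq_prod => i _; rewrite lift0; lia.
Qed.

Lemma fact_size_le_prod {s : seq nat} :
  path ltn 0 s -> (size s)`! <= \prod_(x <- s) x.
Proof.
move/prod_iota_le_path; apply: leq_trans.
by rewrite fact_prod big_add1 big_mkord.
Qed.

Lemma prod_primes_le {n} : 0 < n -> \prod_(p <- primes n) p <= n.
Proof.
move=> n_gt0; rewrite {2}(prod_prime_decomp n_gt0) prime_decompE big_map.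
rewrite big_seq [leqRHS]big_seq; apply: leq_prod => p p_n.
have lognp_gt0 : 0 < logn p n by rewrite logn_gt0.
move: p_n; rewrite mem_primes => /and3P[/prime_gt0 p_gt0 _ _].
by rewrite -{1}(expn1 p) leq_pexp2l.
Qed.

Lemma fact_size_primes_le {n} : 0 < n -> (size (primes n))`! <= n.
Proof.
move=> n_gt0; have path_primes : path ltn 0 (primes n).
  have := sorted_primes n; have := all_prime_primes n.
  by case: (primes n) => [|p s] //= /andP[/prime_gt0 -> _].
exact: leq_trans (fact_size_le_prod path_primes) (prod_primes_le n_gt0).
Qed.

Lemma ncongr_le_size_primes N {x y} : x != y ->
  ncongr N x y <= size (primes (maxn x y - minn x y)).
Proof.
rewrite neq_ltn; wlog lt_xy : x y / x < y => [hwlog /orP[lt_xy|lt_yx]|_].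
- by apply: hwlog; rewrite ?lt_xy.
- rewrite maxnC minnC /ncongr (eq_count (a2 := fun p => prime p && (y == x %[mod p]))).
    by apply: hwlog; rewrite ?lt_yx.
  by move=> p; rewrite eq_sym.
rewrite /ncongr -size_filter; apply: uniq_leq_size; first exact/filter_uniq/iota_uniq.
move=> p; rewrite mem_filter => /andP[/andP[p_pr eq_xy] _].
rewrite (maxn_idPr (ltnW lt_xy)) (minn_idPl (ltnW lt_xy)) mem_primes p_pr subn_gt0 lt_xy.
by rewrite -eqn_mod_dvd 1?eq_sym // ltnW.
Qed.

Open Scope R_scope.

Lemma INR_expn j e : INR (j ^ e)%N = INR j ^ e.
Proof. by elim: e => [|e IHe] //; rewrite expnS mult_INR IHe. Qed.

Lemma ln_le_ln x y : 0 < x -> x <= y -> ln x <= ln y.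
Proof.
move=> x_gt0 [lt_xy|->]; last exact: Rle_refl.
by left; apply: ln_increasing.
Qed.

Lemma ln_gt_0 {x} : 1 < x -> 0 < ln x.
Proof. by move=> x_gt1; rewrite -ln_1; apply: ln_increasing; lra. Qed.

Lemma ln_10_lt_4 : ln 10 < 4.
Proof.
have e_gt2 : 2 < exp 1 by have := exp_ineq1 1 R1_neq_R0; lra.
have exp4 : exp 4 = exp 1 * exp 1 * (exp 1 * exp 1).
  by rewrite -!exp_plus; f_equal; lra.
have e2_gt4 : 4 < exp 1 * exp 1 by nra.
rewrite -(ln_exp 4); apply: ln_increasing; first lra.
rewrite exp4; nra.
Qed.

Lemma pow_ln_le_ln_fact {j} k : (0 < j)%N ->
  INR (k - j) * ln (INR j) <= ln (INR k`!).
Proof.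
move=> j_gt0; have INRj_gt0 : 0 < INR j by apply/lt_0_INR/ltP.
rewrite -ln_pow //; apply: ln_le_ln; first exact: pow_lt.
by rewrite -INR_expn; apply/le_INR/leP/pow_le_fact.
Qed.

Lemma size_le_of_ln_fact (M : R) k : 1 <= M -> ln (INR k`!) <= 4 * M ->
  INR k * ln M <= 16 * M.
Proof.
move=> M_ge1 ln_fact_le.
pose s := sqrt M; pose j := k./2.
have s_gt0 : 0 < s by apply: sqrt_lt_R0; lra.
have sqr_s : s * s = M by apply: sqrt_sqrt; lra.
have lnM : ln M = 2 * ln s by rewrite -{1}sqr_s ln_mult //; lra.
have ln_s_le : ln s <= s - 1.
  by have := exp_ineq1_le (ln s); rewrite exp_ln //; lra.
have k_le_j : INR k <= 2 * INR j + 1.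
  have : (k <= 2 * j + 1)%N by rewrite /j; lia.
  by move/leP/le_INR; rewrite plus_INR mult_INR /=; lra.
have k_le_kj : INR k <= 2 * INR (k - j).
  have : (k <= 2 * (k - j))%N by rewrite /j; lia.
  by move/leP/le_INR; rewrite mult_INR /=; lra.
clearbody s j.
have s_ge1 : 1 <= s by nra.
have := pos_INR k; have := pos_INR (k - j).
have [j_le_s|lt_sj] := Rle_or_lt (INR j) s.
- (* k <= 2 sqrt M + 1 and ln M <= 2 (sqrt M - 1) *)
  rewrite lnM; nra.
- (* ln j >= ln sqrt M = ln M / 2, and (k - j) ln j <= ln k! *)
  have j_gt0 : (0 < j)%N by apply/ltP/INR_lt; rewrite INR_0; exact: Rlt_trans s_gt0 lt_sj.
  have ln_sj : ln s < ln (INR j) by apply: ln_increasing.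
  have ln_s_ge0 : 0 <= ln s by rewrite -ln_1; apply: ln_le_ln; lra.
  have := pow_ln_le_ln_fact k j_gt0; nra.
Qed.

Lemma size_primes_le (M : R) n : 1 < M -> (0 < n)%N -> INR n <= Rpower 10 M ->
  INR (size (primes n)) <= 16 * M / ln M.
Proof.
move=> M_gt1 n_gt0 n_le; have lnM_gt0 := ln_gt_0 M_gt1.
have ln_fact_le : ln (INR (size (primes n))`!) <= 4 * M.
  have fact_le := fact_size_primes_le n_gt0.
  apply: Rle_trans (_ : ln (Rpower 10 M) <= _).
    apply: ln_le_ln; first by apply/lt_0_INR/ltP/fact_gt0.
    by apply: Rle_trans n_le; apply/le_INR/leP.
  by rewrite ln_Rpower; have := ln_10_lt_4; nra.
apply: (Rmult_le_reg_r (ln M)) => //; rewrite /Rdiv Rmult_assoc Rinv_l; last lra.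
by rewrite Rmult_1_r; apply: size_le_of_ln_fact => //; lra.
Qed.

Lemma ncongr_le (M : R) N x y : 1 < M -> x != y ->
  INR x <= Rpower 10 M -> INR y <= Rpower 10 M ->
  INR (ncongr N x y) <= 16 * M / ln M.
Proof.
move=> M_gt1 neq_xy x_le y_le.
apply: (Rle_trans _ _ _ (le_INR _ _ (elimT leP (ncongr_le_size_primes N neq_xy)))).
apply: size_primes_le; [by [] | rewrite subn_gt0; lia |].
apply: (Rle_trans _ (INR (maxn x y))); first exact/le_INR/leP/leq_subr.
by case/orP: (leq_total x y) => [/maxn_idPr|/maxn_idPl] ->.
Qed.

Lemma INR_sum_le (I : Type) (r : seq I) (P : pred I) (F : I -> nat) (B : R) :
  0 <= B -> (forall i, P i -> INR (F i) <= B) ->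
  INR (\sum_(i <- r | P i) F i) <= INR (size r) * B.
Proof.
move=> B_ge0 F_le; elim: r => [|a r IHr]; first by rewrite big_nil /=; lra.
rewrite big_cons (_ : size (a :: r) = (size r).+1) // S_INR.
case: ifP => Pa; last lra.
by rewrite plus_INR; have := F_le a Pa; lra.
Qed.

Lemma Jcount_diag_split X N : uniq X ->
  Jcount X N = (primepi N * size X + \sum_(x <- X) \sum_(y <- X | y != x) ncongr N x y)%N.
Proof.
move=> X_uniq.
rewrite -[(primepi N * _)%N]iter_addn_0 -count_predT -big_const_seq -big_split /=.
rewrite /Jcount big_seq [RHS]big_seq; apply: eq_bigr => x x_X.
rewrite (bigD1_seq x x_X X_uniq); congr (_ + _)%N.
by apply: eq_count => p; rewrite eqxx andbT.
Qed.

Theorem theorem1 :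
  exists (C M0 : R) (N0 : nat), (0 < C)%R /\
  forall (M : R) (X : seq nat) (N : nat),
    (M0 <= M)%R -> (N0 <= N)%N ->
    uniq X ->
    (forall x, x \in X -> (1 <= x)%N /\ (INR x <= Rpower 10 M)%R) ->
    (Rabs (INR (Jcount X N) - INR (primepi N) * INR (size X))
       <= C * (INR (size X) ^ 2 * M / ln M))%R.
Proof.
exists 16, 2, 0%N; split=> [|M X N M_ge2 _ X_uniq X_bounded]; first lra.
have B_ge0 : 0 <= 16 * M / ln M.
  by apply: Rmult_le_pos; [lra | left; apply/Rinv_0_lt_compat/ln_gt_0; lra].
rewrite Jcount_diag_split // plus_INR mult_INR Rplus_minus_l.
rewrite Rabs_right; last exact/Rle_ge/pos_INR.
rewrite big_seq_cond.
apply: (Rle_trans _ (INR (size X) * (INR (size X) * (16 * M / ln M)))).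
  apply: INR_sum_le => [|x /andP[x_X _]]; first exact/Rmult_le_pos/B_ge0/pos_INR.
  rewrite big_seq_cond; apply: INR_sum_le => // y /andP[y_X neq_yx].
  apply: ncongr_le; [lra | by rewrite eq_sym |
                     exact: (X_bounded x x_X).2 | exact: (X_bounded y y_X).2].
by right; rewrite /Rdiv; ring.
Qed.
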